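(* Fix nonnegative integers $k,\ell$. Let $\mathbf{P}:(\mathbb{Z}/2\mathbb{Z})^k\to\mathbb{R}[x]$ and $\mathbf{Q}:(\mathbb{Z}/2\mathbb{Z})^\ell\to\mathbb{R}[x]$, and define $\mathbf{S}:(\mathbb{Z}/2\mathbb{Z})^{k+\ell}\to\mathbb{R}[x]$ by $S_{\alpha\beta}=P_\alpha Q_\beta$ for $\alpha\in(\mathbb{Z}/2\mathbb{Z})^k$, $\beta\in(\mathbb{Z}/2\mathbb{Z})^\ell$. If $\mathbf{P}$ is an interpolatory $k$-cube and $\mathbf{Q}$ is an interpolatory $\ell$-cube, then $\mathbf{S}$ is an interpolatory $(k+\ell)$-cube.
   Context: Elements of $(\mathbb{Z}/2\mathbb{Z})^k$ are strings $\alpha=\alpha_1\cdots\alpha_k$, and $\eta(i)$ has a single $1$ in coordinate $i$. Interpolation operators. For $\lambda,\rho\ge0$, ${}_1\mathrm{I}^\rho_\lambda$ maps $\mathbf{P}:(\mathbb{Z}/2\mathbb{Z})^k\to\mathbb{R}[x]$ to $\mathbf{Q}:(\mathbb{Z}/2\mathbb{Z})^{k-1}\to\mathbb{R}[x]$ with $Q_\alpha=\lambda P_{1\alpha}+\rho P_{0\alpha}$. For $k$-tuples $\lambda=(\lambda_1,\ldots,\lambda_k)$ and $\rho=(\rho_1,\ldots,\rho_k)$ of nonnegative reals, $\mathbb{I}^\rho_\lambda={}_1\mathrm{I}^{\rho_k}_{\lambda_k}\cdots{}_1\mathrm{I}^{\rho_1}_{\lambda_1}$, which yields a single polynomial. Flip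 operators. $(\Phi_i\mathbf{P})_\alpha=xP_{\alpha+\eta(i)}$ if $\alpha_i=0$, and $=P_{\alpha+\eta(i)}$ if $\alpha_i=1$. For $S\subseteq\{1,\ldots,k\}$, $\Phi_S=\prod_{i\in S}\Phi_i$. Interpolatory $k$-cubes. $\mathbf{P}$ is an interpolatory $k$-cube if, for all $k$-tuples $\lambda,\rho$ of positive reals and all $S\subseteq\{1,\ldots,k\}$, $\mathbb{I}^\rho_\lambda\Phi_S\mathbf{P}$ is standard and has only nonpositive zeros. For $k=0$ this means the single polynomial is standard with only nonpositive zeros. Standard means $\equiv0$ or positive leading coefficient. Only nonpositive zeros means $\equiv0$ or all zeros real and $\le0$. *)

From HB Require Import structures.
From mathcomp Require Import all_boot all_order all_algebra.
From mathcomp Require Import reals.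
Set Implicit Arguments. Unset Strict Implicit. Unset Printing Implicit Defensive.
Import Order.TTheory GRing.Theory Num.Theory.
Local Open Scope ring_scope.

Section Cubes.
Variable R : realType.

(* A map (Z/2Z)^k -> R[x]; alpha = alpha_1 ... alpha_k is a k-tuple of bits,
   tnth alpha i being coordinate i+1 (0-based index). *)
Definition cube (k : nat) := k.-tuple bool -> {poly R}.

Definition interp1 (k : nat) (lam rho : R) (P : cube k.+1) : cube k :=
  fun a => lam *: P [tuple of true :: a] + rho *: P [tuple of false :: a].

(* I^rho_lambda = _1I^{rho_k}_{lambda_k} ... _1I^{rho_1}_{lambda_1}
   (first applies lambda_1, rho_1), yielding a single polynomial. *)
Fixpoint interp (k : nat) : k.-tuple R -> k.-tuple R -> cube k -> {poly R} :=
  match k return k.-tuple R -> k.-tuple R -> cube k -> {poly R} with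
  | 0 => fun _ _ P => P [tuple]
  | k'.+1 => fun lam rho P =>
      interp (behead_tuple lam) (behead_tuple rho) (interp1 (thead lam) (thead rho) P)
  end.

Definition flip_tup (k : nat) (i : 'I_k) (a : k.-tuple bool) : k.-tuple bool :=
  [tuple (if j == i then ~~ tnth a j else tnth a j) | j < k].

Definition Phi (k : nat) (i : 'I_k) (P : cube k) : cube k :=
  fun a => if tnth a i then P (flip_tup i a) else 'X * P (flip_tup i a).

Definition PhiS (k : nat) (S : {set 'I_k}) (P : cube k) : cube k :=
  foldr (@Phi k) P (enum S).

Definition standard (p : {poly R}) : Prop := p = 0 \/ 0 < lead_coef p.

(* only nonpositive zeros: identically zero, or all (complex) zeros are real
   and <= 0, i.e. p splits over R into linear factors with roots <= 0. *)
Definition nonpos_zeros (p : {poly R}) : Prop :=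
  p = 0 \/ exists s : seq R, all (fun r => r <= 0) s /\
                          p = lead_coef p *: \prod_(r <- s) ('X - r%:P).

Definition interpolatory (k : nat) (P : cube k) : Prop :=
  forall (lam rho : k.-tuple R),
    (forall i, 0 < tnth lam i) -> (forall i, 0 < tnth rho i) ->
    forall S : {set 'I_k},
      standard (interp lam rho (PhiS S P)) /\ nonpos_zeros (interp lam rho (PhiS S P)).

End Cubes.

From HB Require Import structures.
From mathcomp Require Import all_boot all_order all_algebra.
From mathcomp Require Import reals.
Set Implicit Arguments. Unset Strict Implicit. Unset Printing Implicit Defensive.
Import Order.TTheory GRing.Theory Num.Theory.
Local Open Scope ring_scope.

(* Interpolation contracts one coordinate at a time by a linear map, so on a
   cube S with S_(alpha beta) = P_alpha Q_beta it first contracts the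
   P-coordinates (treating Q_beta as a scalar) and then the Q-coordinates:
   the interpolation of S is the product of the interpolations of P and Q.
   Flips are compatible with this splitting, since Phi_T multiplies
   S_(alpha beta) by x once for every coordinate of T where alpha beta is 0
   and then flips the coordinates in T.  Hence every polynomial tested for S
   is a product of one tested for P and one tested for Q, and both
   standardness and having only nonpositive real zeros are stable under
   products. *)

Lemma cat_tuple_cons (T : Type) n m x (t : n.-tuple T) (u : m.-tuple T) :
  cat_tuple [tuple of x :: t] u = [tuple of x :: cat_tuple t u] :> (n.+1 + m).-tuple T.
Proof. exact: val_inj. Qed.

Lemma behead_tuple_cons (T : Type) n x (t : n.-tuple T) :
  behead_tuple [tuple of x :: t] = t.
Proof. exact: val_inj. Qed.

Lemma cat0_tuple (T : Type) m (t : 0.-tuple T) (u : m.-tuple T) :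
  cat_tuple t u = u :> (0 + m).-tuple T.
Proof. by apply: val_inj; rewrite /= tuple0. Qed.

Lemma cat_tuple_split_forall (T : Type) (p : T -> Prop) n m (t : (n + m).-tuple T) :
  (forall i, p (tnth t i)) ->
  exists t1 t2,
    [/\ t = cat_tuple t1 t2, forall i, p (tnth t1 i) & forall j, p (tnth t2 j)].
Proof.
move=> pt.
exists [tuple tnth t (lshift m i) | i < n], [tuple tnth t (rshift n j) | j < m].
split=> [|i|j]; rewrite ?tnth_mktuple //.
apply: eq_from_tnth => x; rewrite -(splitK x); case: (split x) => y /=.
  by rewrite tnth_lshift tnth_mktuple.
by rewrite tnth_rshift tnth_mktuple.
Qed.

Section ProductCubes.
Variable R : realType.

Lemma eq_interp n (lam rho : n.-tuple R) (P P' : cube R n) :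
  P =1 P' -> interp lam rho P = interp lam rho P'.
Proof.
elim: n lam rho P P' => [|n IHn] lam rho P P' eqP /=; first exact: eqP.
by apply: IHn => a; rewrite /interp1 !eqP.
Qed.

Lemma interpMl n (lam rho : n.-tuple R) (P : cube R n) (c : {poly R}) :
  interp lam rho (fun a => c * P a) = c * interp lam rho P.
Proof.
elim: n lam rho P => [|n IHn] lam rho P //=.
by rewrite -IHn; apply: eq_interp => a; rewrite /interp1 !scalerAr mulrDr.
Qed.

Definition cube_product k l (P : cube R k) (Q : cube R l) (S : cube R (k + l)) :=
  forall a b, S (cat_tuple a b) = P a * Q b.

Lemma interp_cube_product k l (lamP rhoP : k.-tuple R) (lamQ rhoQ : l.-tuple R)
    (P : cube R k) (Q : cube R l) (S : cube R (k + l)) :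
  cube_product P Q S ->
  interp (cat_tuple lamP lamQ) (cat_tuple rhoP rhoQ) S
    = interp lamP rhoP P * interp lamQ rhoQ Q.
Proof.
elim: k lamP rhoP P S => [|k IHk] lamP rhoP P S prodS.
  rewrite !cat0_tuple (tuple0 lamP) /= -interpMl; apply: eq_interp => b.
  by rewrite -prodS cat0_tuple.
case/tupleP: lamP => x lamP; case/tupleP: rhoP => y rhoP.
rewrite !cat_tuple_cons /= !theadE !behead_tuple_cons.
apply: IHk => a b; rewrite /interp1 -!cat_tuple_cons !prodS.
by rewrite mulrDl !scalerAl.
Qed.

Lemma tnth_flip_tup n (i j : 'I_n) (a : n.-tuple bool) :
  tnth (flip_tup i a) j = tnth a j (+) (j == i).
Proof. by rewrite tnth_mktuple; case: eqP; rewrite ?addbT ?addbF. Qed.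

Definition flip_set n (T : {set 'I_n}) (a : n.-tuple bool) : n.-tuple bool :=
  [tuple tnth a j (+) (j \in T) | j < n].

Lemma foldr_PhiE n (P : cube R n) (s : seq 'I_n) a : uniq s ->
  foldr (@Phi R n) P s a
    = (\prod_(i <- s | ~~ tnth a i) 'X) * P [tuple tnth a j (+) (j \in s) | j < n].
Proof.
elim: s a => [|i s IHs] a /=.
  move=> _; rewrite big_nil mul1r; congr P.
  by apply: eq_from_tnth => j; rewrite tnth_mktuple addbF.
case/andP => i_notin_s uniq_s; rewrite /Phi IHs // big_cons.
have flip_off_s (j : 'I_n) : j \in s -> tnth (flip_tup i a) j = tnth a j.
  by rewrite tnth_flip_tup; case: eqP => [->|_]; rewrite ?(negPf i_notin_s) ?addbF.
have -> : \prod_(j <- s | ~~ tnth (flip_tup i a) j) 'X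
          = \prod_(j <- s | ~~ tnth a j) 'X :> {poly R}.
  rewrite big_seq_cond [RHS]big_seq_cond; apply: eq_bigl => j.
  by case: (boolP (j \in s)) => // /flip_off_s ->.
have -> : [tuple tnth (flip_tup i a) j (+) (j \in s) | j < n]
          = [tuple tnth a j (+) (j \in i :: s) | j < n].
  apply: eq_from_tnth => j; rewrite 2!tnth_mktuple tnth_flip_tup in_cons.
  by case: eqP => [->|_]; rewrite ?(negPf i_notin_s) ?addbF.
by case: (tnth a i); rewrite /= ?mulrA.
Qed.

Lemma PhiSE n (P : cube R n) (T : {set 'I_n}) a :
  PhiS T P a = (\prod_(i in T | ~~ tnth a i) 'X) * P (flip_set T a).
Proof.
rewrite /PhiS foldr_PhiE ?enum_uniq // big_enum_cond.
by congr (_ * P _); apply: eq_from_tnth => j; rewrite !tnth_mktuple mem_enum.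
Qed.

Lemma PhiS_cube_product k l (P : cube R k) (Q : cube R l) (S : cube R (k + l))
    (T : {set 'I_(k + l)}) :
  cube_product P Q S ->
  cube_product (PhiS [set i | lshift l i \in T] P)
               (PhiS [set j | rshift k j \in T] Q) (PhiS T S).
Proof.
move=> prodS a b; rewrite !PhiSE.
have -> : flip_set T (cat_tuple a b) = cat_tuple (flip_set [set i | lshift l i \in T] a)
                                                 (flip_set [set j | rshift k j \in T] b).
  apply: eq_from_tnth => x; rewrite -(splitK x); case: (split x) => y /=.
    by rewrite tnth_lshift !tnth_mktuple tnth_lshift inE.
  by rewrite tnth_rshift !tnth_mktuple tnth_rshift inE.
rewrite prodS big_mkcond big_split_ord /= -!big_mkcond mulrACA.
by congr (_ * _ * (_ * _)); apply: eq_bigl => i; rewrite inE ?tnth_lshift ?tnth_rshift.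
Qed.

Lemma standardM (p q : {poly R}) : standard p -> standard q -> standard (p * q).
Proof.
move=> [->|p_gt0]; first by left; rewrite mul0r.
move=> [->|q_gt0]; first by left; rewrite mulr0.
by right; rewrite lead_coefM mulr_gt0.
Qed.

Lemma nonpos_zerosM (p q : {poly R}) :
  nonpos_zeros p -> nonpos_zeros q -> nonpos_zeros (p * q).
Proof.
move=> [->|[s [s_le0 eq_p]]]; first by left; rewrite mul0r.
move=> [->|[t [t_le0 eq_q]]]; first by left; rewrite mulr0.
right; exists (s ++ t); split; first by rewrite all_cat s_le0 t_le0.
by rewrite lead_coefM big_cat {1}eq_p {1}eq_q -scalerAl -scalerAr scalerA.
Qed.

End ProductCubes.

Theorem lemma4p6 (R : realType) (k l : nat) (P : cube R k) (Q : cube R l)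
    (S : cube R (k + l)) :
  (forall (a : k.-tuple bool) (b : l.-tuple bool), S (cat_tuple a b) = P a * Q b) ->
  interpolatory P -> interpolatory Q -> interpolatory S.
Proof.
move=> prodS interpP interpQ lam rho lam_gt0 rho_gt0 T.
have [lamP [lamQ [-> lamP_gt0 lamQ_gt0]]] :=
  cat_tuple_split_forall (p := fun x : R => 0 < x) lam_gt0.
have [rhoP [rhoQ [-> rhoP_gt0 rhoQ_gt0]]] :=
  cat_tuple_split_forall (p := fun x : R => 0 < x) rho_gt0.
rewrite (interp_cube_product _ _ _ _ (PhiS_cube_product T prodS)).
have [stdP nposP] := interpP lamP rhoP lamP_gt0 rhoP_gt0 [set i | lshift l i \in T].
have [stdQ nposQ] := interpQ lamQ rhoQ lamQ_gt0 rhoQ_gt0 [set j | rshift k j \in T].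
by split; [exact: standardM | exact: nonpos_zerosM].
Qed.
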